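(* Let $f_1,\dots,f_n:\mathbb{R}^d\to\mathbb{R}$ be convex and differentiable, each with $L$-Lipschitz gradient, and let $f=\frac1n\sum_{i=1}^n f_i$ be $\lambda$-strongly convex with minimizer $x^*$. Fix $S\subseteq[n]$, a step size $\eta>0$, an epoch length $m\ge 1$, and parameters $c>0$, $\beta>0$, $\kappa>1$. Define $$\gamma=\kappa\Big[1-\big(1-\tfrac1\kappa\big)^m\Big]\Big(2c\eta\big(1-L\eta(1+\beta)\big)-\tfrac1n-\tfrac{2c}{\kappa\lambda}\Big),$$ $$\theta=\max\Big\{\tfrac{2c}{\gamma\lambda}\big(1-\tfrac1\kappa\big)^m+\tfrac{2Lc\eta^2}{\gamma}\big(1+\tfrac1\beta\big)\kappa\Big[1-\big(1-\tfrac1\kappa\big)^m\Big],\ \big(1-\tfrac1\kappa\big)^m\Big\}.$$ Suppose $$\frac1\kappa+2Lc\eta^2\Big(1+\frac1\beta\Big)\le\frac1n,\qquad \gamma>0,\qquad \theta<1,$$ and that the epoch-end selection probabilities satisfy $p_j\propto(1-\frac1\kappa)^{m-j}$, $j=1,\dots,m$. Then the iterates of the synchronous HSAG algorithm (described in the context) satisfy, for every $k\ge 0$, $$\mathbb{E}\Big[f(\tilde x^{k+1})-f(x^* )+\tfrac1\gamma\tilde G_{k+1}\Big]\le\theta\,\mathbb{E}\Big[f(\tilde x^{k})-f(x^* )+\tfrac1\gamma\tilde G_{k}\Big].$$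
   Context: Notation: $[n]=\{1,\dots,n\}$; for a differentiable convex $g$, the Bregman divergence is $D_g(x,y)=g(x)-g(y)-\langle\nabla g(y),x-y\rangle$. Synchronous HSAG algorithm (generic variance-reduced method with the HSAG schedule and epoch length $m$): start from $x^0\in\mathbb{R}^d$, set $\tilde x^0=x^0$ and $\alpha_i^0=x^0$ for all $i\in[n]$. The algorithm runs in epochs; epoch $k+1$ ($k=0,1,2,\dots$) consists of the steps $t=km,\dots,km+m-1$, and at its start $x^{km}=\tilde x^k$. At each step $t$, an index $i_t$ is drawn uniformly from $[n]$, independently of everything before, and $$x^{t+1}=x^t-\eta\Big(\nabla f_{i_t}(x^t)-\nabla f_{i_t}(\alpha_{i_t}^t)+\tfrac1n\textstyle\sum_{i=1}^n\nabla f_i(\alpha_i^t)\Big).$$ The auxiliary points $\alpha_i^t$ are updated by the HSAG schedule: for $i\in S$, $\alpha_i^{t+1}=x^t$ if $i_t=i$ and $\alpha_i^{t+1}=\alpha_i^t$ otherwise (SAGA-type); for $i\notin S$, $\alpha_i^t=\tilde x^k$ for all $t$ in epoch $k+1$ (SVRG-type, refreshed to the current iterate at the start of each epoch). At the end of epoch $k+1$, $\tilde x^{k+1}$ is chosen at random from $\{x^{km},x^{km+1},\dots,x^{km+m-1}\}$, selecting $x^{km+j-1}$ with probability $p_j$ ($j=1,\dots,m$), and $x^{(k+1)m}$ is set to $\tilde x^{k+1}$. (Special cases: $S=[n]$ gives SAGA, $S=\emptyset$ gives SVRG.) Define $\tilde G_k=\frac1n\sum_{i\in S}\big(f_i(\alpha_i^{km})-f_i(x^*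 )-\langle\nabla f_i(x^* ),\alpha_i^{km}-x^*\rangle\big)$. Expectations are over all random indices and epoch-end selections. *)

From Stdlib Require Import Reals.
From mathcomp Require Import all_boot.
Set Implicit Arguments. Unset Strict Implicit. Unset Printing Implicit Defensive.

Local Open Scope R_scope.

Definition vec (d : nat) := 'I_d -> R.

Definition vadd d (u v : vec d) : vec d := fun j => u j + v j.
Definition vsub d (u v : vec d) : vec d := fun j => u j - v j.
Definition vscale d (a : R) (u : vec d) : vec d := fun j => a * u j.
Definition inner d (u v : vec d) : R := \big[Rplus/0]_(j < d) (u j * v j).
Definition vnorm d (u : vec d) : R := sqrt (inner u u).

Definition has_gradient d (f : vec d -> R) (g : vec d -> vec d) : Prop :=
  forall x eps, 0 < eps -> exists delta, 0 < delta /\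
    forall h, vnorm h < delta ->
      Rabs (f (vadd x h) - f x - inner (g x) h) <= eps * vnorm h.

Definition convex d (f : vec d -> R) : Prop :=
  forall x y t, 0 <= t <= 1 ->
    f (vadd (vscale t x) (vscale (1 - t) y)) <= t * f x + (1 - t) * f y.

Definition strongly_convex d (lam : R) (f : vec d -> R) : Prop :=
  forall x y t, 0 <= t <= 1 ->
    f (vadd (vscale t x) (vscale (1 - t) y))
      <= t * f x + (1 - t) * f y - lam / 2 * t * (1 - t) * (vnorm (vsub x y)) ^ 2.

Definition lipschitz_grad d (L : R) (g : vec d -> vec d) : Prop :=
  forall x y, vnorm (vsub (g x) (g y)) <= L * vnorm (vsub x y).

Definition avg_fun d n (fs : 'I_n -> vec d -> R) : vec d -> R :=
  fun x => / INR n * \big[Rplus/0]_(i < n) fs i x.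

Definition bregman d (f : vec d -> R) (g : vec d -> vec d) (x y : vec d) : R :=
  f x - f y - inner (g y) (vsub x y).

(* Inner state during an epoch: (x^t, (alpha_i^t)_i). *)
Definition inner_state d n := (vec d * ('I_n -> vec d))%type.

Definition hsag_step d n (grad : 'I_n -> vec d -> vec d) (S : {set 'I_n})
    (eta : R) (st : inner_state d n) (i : 'I_n) : inner_state d n :=
  let x := st.1 in let a := st.2 in
  ( fun j => x j - eta * (grad i x j - grad i (a i) j
                + / INR n * \big[Rplus/0]_(l < n) grad l (a l) j),
    fun l => if (l == i) && (l \in S) then x else a l ).

Fixpoint hsag_traj d n (grad : 'I_n -> vec d -> vec d) (S : {set 'I_n}) (eta : R) (st : inner_state d n) (ws : seq 'I_n)
    : seq (inner_state d n) :=
  st :: match ws with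
        | [::] => [::]
        | i :: ws' => hsag_traj grad S eta (hsag_step grad S eta st i) ws'
        end.

(* Epoch-level state: (x~^k, (alpha_i^{km})_i). *)
(* next epoch state, given the m drawn indices w (w t = i_{km+t}) and the
   selection index j : 'I_m, meaning x~^{k+1} = x^{km+j} (i.e. the paper's
   selection j+1, probability p_{j+1}). *)
Definition hsag_epoch d n m (grad : 'I_n -> vec d -> vec d) (S : {set 'I_n}) (eta : R) (s : inner_state d n)
    (w : {ffun 'I_m -> 'I_n}) (j : 'I_m) : inner_state d n :=
  let xt := s.1 in
  let st0 : inner_state d n := (xt, fun i => if i \in S then s.2 i else xt) in
  let tr := hsag_traj grad S eta st0 [seq w t | t <- enum 'I_m] in
  ((nth st0 tr j).1, (nth st0 tr m).2).

(* Transition (Markov) operator of one epoch: conditional expectation of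
   Phi(next epoch state) given the current epoch state.  The indices are i.i.d.
   uniform on [n] (each sequence has probability (1/n)^m) and the selection is
   independent with probabilities p_1..p_m. *)
Definition epoch_op d n m (grad : 'I_n -> vec d -> vec d) (S : {set 'I_n}) (eta : R) (p : nat -> R)
    (Phi : inner_state d n -> R) (s : inner_state d n) : R :=
  \big[Rplus/0]_(w : {ffun 'I_m -> 'I_n})
     ((/ INR n) ^ m * \big[Rplus/0]_(j < m) (p (j.+1) * Phi (hsag_epoch grad S eta s w j))).

(* E[ Phi(x~^k, alpha^{km}) ] for the algorithm started at x0 with alpha_i^0 = x0. *)
Definition hsag_expect d n m (grad : 'I_n -> vec d -> vec d) (S : {set 'I_n}) (eta : R) (p : nat -> R) (x0 : vec d) (k : nat)
    (Phi : inner_state d n -> R) : R :=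
  Nat.iter k (epoch_op m grad S eta p) Phi (x0, fun _ => x0).

Definition Gtilde d n (fs : 'I_n -> vec d -> R) (grad : 'I_n -> vec d -> vec d) (S : {set 'I_n}) (xstar : vec d)
    (s : inner_state d n) : R :=
  / INR n * \big[Rplus/0]_(i < n | i \in S) bregman (fs i) (grad i) (s.2 i) xstar.

Definition hsag_gamma (n m : nat) (L lam eta c beta kappa : R) : R :=
  kappa * (1 - (1 - / kappa) ^ m) *
  (2 * c * eta * (1 - L * eta * (1 + beta)) - / INR n - 2 * c / (kappa * lam)).

Definition hsag_theta (n m : nat) (L lam eta c beta kappa : R) : R :=
  let g := hsag_gamma n m L lam eta c beta kappa in
  Rmax (2 * c / (g * lam) * (1 - / kappa) ^ m
        + 2 * L * c * eta ^ 2 / g * (1 + / beta) * kappa * (1 - (1 - / kappa) ^ m))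
       ((1 - / kappa) ^ m).

From HB Require Import structures.
From Stdlib Require Import Reals Lra Psatz FunctionalExtensionality.
From mathcomp Require Import all_boot.
Set Implicit Arguments. Unset Strict Implicit.
Local Open Scope R_scope.

(** Within an epoch, the Lyapunov function [T(x, alpha) = c |x - x*|^2 + G~(alpha)] contracts
    in one step, in expectation over [i_t], by the factor [q = 1 - 1/kappa], up to a gain
    [- delta (f(x) - f(x* ))] and an error [e N] proportional to the Bregman sum [N] of the
    SVRG-type indices, which stays constant during the epoch.  The one-step bound combines
    convexity, cocoercivity [|grad f_i y - grad f_i x|^2 <= 2 L D_{f_i}(y, x)], Young's
    inequality with parameter [beta], the vanishing of [sum_i grad f_i x*] and quadratic growth
    [lambda/2 |x - x*|^2 <= f x - f x*]; the condition on [1/kappa] absorbs the [G~] terms.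
    Unrolling it over the [m] steps, the weights [p_j ~ q^(m-j)] turn the weighted sum of
    gaps into [gamma] times the expected gap at the selected point.  At the epoch start,
    [T] and [N] are bounded by [f(x~) - f(x* )] and [G~], which yields the factor [theta];
    the transition operator is monotone and homogeneous, so the bound passes to the
    expectations of all later epochs. *)

HB.instance Definition _ := Monoid.isComLaw.Build R 0 Rplus
  (fun a b c => esym (Rplus_assoc a b c)) Rplus_comm Rplus_0_l.
HB.instance Definition _ := Monoid.isComLaw.Build R 1 Rmult
  (fun a b c => esym (Rmult_assoc a b c)) Rmult_comm Rmult_1_l.
HB.instance Definition _ := Monoid.isMulLaw.Build R 0 Rmult Rmult_0_l Rmult_0_r.
HB.instance Definition _ := Monoid.isAddLaw.Build R Rmult Rplus
  Rmult_plus_distr_r Rmult_plus_distr_l.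

Section RealSums.
Variables (T : Type) (r : seq T) (P : pred T).
Implicit Types F G : T -> R.

Lemma sumR_le F G : (forall i, P i -> F i <= G i) ->
  \big[Rplus/0]_(i <- r | P i) F i <= \big[Rplus/0]_(i <- r | P i) G i.
Proof. by move=> H; apply: (big_ind2 (fun a b => a <= b)) => // *; lra. Qed.

Lemma sumR_ge0 F : (forall i, P i -> 0 <= F i) -> 0 <= \big[Rplus/0]_(i <- r | P i) F i.
Proof. by move=> H; apply: (big_ind (fun a => 0 <= a)) => // *; lra. Qed.

Lemma sumR_scal a F :
  \big[Rplus/0]_(i <- r | P i) (a * F i) = a * \big[Rplus/0]_(i <- r | P i) F i.
Proof. by rewrite big_distrr. Qed.

Lemma sumR_sub F G : \big[Rplus/0]_(i <- r | P i) (F i - G i) =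
  \big[Rplus/0]_(i <- r | P i) F i - \big[Rplus/0]_(i <- r | P i) G i.
Proof. by elim/big_rec3: _ => [|i a b c _ ->]; ring. Qed.

End RealSums.

Lemma sumR_const_card (I : finType) c : \big[Rplus/0]_(i : I) c = INR #|I| * c.
Proof.
rewrite big_const; elim: #|I| => [|k IH]; first by rewrite /=; ring.
rewrite S_INR Rmult_plus_distr_r -IH /=; ring.
Qed.

Lemma sumR_const n c : \big[Rplus/0]_(i < n) c = INR n * c.
Proof. by rewrite sumR_const_card card_ord. Qed.

Lemma sumR_if_eq n (l : 'I_n) (A B : R) :
  \big[Rplus/0]_(i < n) (if l == i then A else B) = INR n * B + (A - B).
Proof.
rewrite (eq_bigr (fun i => B + (if l == i then A - B else 0))); last by move=> i _; case: ifP; lra.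
rewrite big_split sumR_const (bigD1 l) //= eqxx big1 => [|i /negbTE]; first lra.
by rewrite eq_sym => ->.
Qed.

Lemma le_of_le_add_small a b c : 0 <= b ->
  (forall t, 0 < t <= 1 -> a <= c + t * b) -> a <= c.
Proof.
move=> Hb H; apply: Rle_plus_epsilon => eps Heps.
have Hb1 : 0 < b + 1 by lra.
set t := Rmin 1 (eps / (b + 1)).
have Ht0 : 0 < t by apply: Rmin_pos; [lra | apply: Rdiv_lt_0_compat].
have Hte : t * (b + 1) <= eps.
  have := Rmin_r 1 (eps / (b + 1)); rewrite -/t => Ht.
  have -> : eps = eps / (b + 1) * (b + 1) by field; lra.
  by apply: Rmult_le_compat_r; lra.
have := H t (conj Ht0 (Rmin_l _ _)); nra.
Qed.

Definition nsq d (u : vec d) := inner u u.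

Section Vectors.
Variable d : nat.
Implicit Types u v w : vec d.

Lemma inner_sym u v : inner u v = inner v u.
Proof. by apply: eq_bigr => j _; rewrite Rmult_comm. Qed.

Lemma inner_lin_l a b u v w :
  inner (fun j => a * u j + b * v j) w = a * inner u w + b * inner v w.
Proof. rewrite /inner -!sumR_scal -big_split; apply: eq_bigr => j _ /=; ring. Qed.

Lemma inner_lin_r a b u v w :
  inner w (fun j => a * u j + b * v j) = a * inner w u + b * inner w v.
Proof. by rewrite inner_sym inner_lin_l !(inner_sym w). Qed.

Lemma inner_scale_r t u w : inner w (fun j => t * u j) = t * inner w u.
Proof. rewrite /inner -sumR_scal; apply: eq_bigr => j _ /=; ring. Qed.

Lemma inner_sum_l n (U : 'I_n -> vec d) w :
  inner (fun j => \big[Rplus/0]_(i < n) U i j) w = \big[Rplus/0]_(i < n) inner (U i) w.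
Proof. by rewrite /inner exchange_big /=; apply: eq_bigr => j _; rewrite big_distrl. Qed.

Lemma inner_sum_r n (U : 'I_n -> vec d) w :
  inner w (fun j => \big[Rplus/0]_(i < n) U i j) = \big[Rplus/0]_(i < n) inner w (U i).
Proof. by rewrite inner_sym inner_sum_l; apply: eq_bigr => i _; apply: inner_sym. Qed.

Lemma inner_zero_l u v : (forall j, u j = 0) -> inner u v = 0.
Proof. by move=> H; rewrite /inner big1 // => j _; rewrite H Rmult_0_l. Qed.

Lemma nsq_ge0 u : 0 <= nsq u.
Proof. by apply: sumR_ge0 => j _; apply: Rle_0_sqr. Qed.

Lemma nsq_eq0 u : nsq u = 0 -> forall j, u j = 0.
Proof.
move=> H j; have : u j * u j <= nsq u.
  rewrite /nsq /inner (bigD1 j) //= -[X in X <= _]Rplus_0_r.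
  by apply: Rplus_le_compat_l; apply: sumR_ge0 => i _; apply: Rle_0_sqr.
by rewrite H => ?; nra.
Qed.

Lemma nsq_expand a u v : nsq (fun j => u j + a * v j) = nsq u + 2 * a * inner u v + a * a * nsq v.
Proof. rewrite /nsq /inner -!sumR_scal -!big_split; apply: eq_bigr => j _ /=; ring. Qed.

Lemma nsq_scale t u : nsq (fun j => t * u j) = t * t * nsq u.
Proof. rewrite /nsq /inner -sumR_scal; apply: eq_bigr => j _ /=; ring. Qed.

Lemma vnorm_ge0 u : 0 <= vnorm u.
Proof. exact: sqrt_pos. Qed.

Lemma vnorm_sq u : vnorm u ^ 2 = nsq u.
Proof. by rewrite /vnorm /= Rmult_1_r sqrt_sqrt //; apply: nsq_ge0. Qed.

Lemma vnorm_le0 u : vnorm u <= 0 -> forall j, u j = 0.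
Proof. move=> H; apply: nsq_eq0; rewrite -vnorm_sq; have := vnorm_ge0 u; nra. Qed.

Lemma vnorm_scale t u : vnorm (fun j => t * u j) = Rabs t * vnorm u.
Proof.
rewrite /vnorm -[inner _ _]/(nsq _) nsq_scale sqrt_mult; [|nra|exact: nsq_ge0].
by rewrite -[t * t]/(Rsqr t) sqrt_Rsqr_abs.
Qed.

Lemma cauchy_schwarz u v : inner u v <= vnorm u * vnorm v.
Proof.
have Hu := nsq_ge0 u; have Hv := nsq_ge0 v.
have Hsq : inner u v * inner u v <= nsq u * nsq v.
  have [H0|Hp] : nsq v = 0 \/ 0 < nsq v by lra.
    by rewrite inner_sym inner_zero_l ?H0; [lra | apply: nsq_eq0].
  (* the quadratic  s |-> nsq (u - s v)  is nonnegative at its minimiser *)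
  have := nsq_ge0 (fun j => u j + (- (inner u v / nsq v)) * v j).
  rewrite nsq_expand => H.
  have : 0 <= (nsq u * nsq v - inner u v * inner u v) / nsq v.
    by apply: Rle_trans H (Req_le _ _ _); field; lra.
  move=> /(Rmult_le_compat_r (nsq v) _ _ (Rlt_le _ _ Hp)).
  by rewrite Rmult_0_l /Rdiv Rmult_assoc Rinv_l; lra.
rewrite /vnorm -sqrt_mult //; apply: Rle_trans (Rle_abs _) _.
by rewrite -sqrt_Rsqr_abs; apply: sqrt_le_1_alt.
Qed.

End Vectors.

Lemma lipschitz_grad_neg d (g : vec d -> vec d) L :
  L < 0 -> lipschitz_grad L g -> forall x y : vec d, x = y.
Proof.
move=> HL0 HL x y; apply: functional_extensionality => j.
have := HL x y; have := vnorm_ge0 (vsub (g x) (g y)); have := vnorm_ge0 (vsub x y).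
move=> ? ? ?; have /vnorm_le0 /(_ j) : vnorm (vsub x y) <= 0 by nra.
rewrite /vsub; lra.
Qed.

Section SmoothConvex.
Variables (d : nat) (f : vec d -> R) (g : vec d -> vec d) (L : R).
Hypotheses (Hg : has_gradient f g) (Hc : convex f) (HL : lipschitz_grad L g).

Lemma line_deriv x h t :
  derivable_pt_lim (fun s => f (vadd x (fun j => s * h j))) t
    (inner (g (vadd x (fun j => t * h j))) h).
Proof.
move=> eps Heps.
set z := vadd x (fun j => t * h j); set vn := vnorm h.
have Hvn : 0 <= vn by apply: vnorm_ge0.
have [del [Hdel Hd]] := Hg z (Rdiv_lt_0_compat _ _ Heps (ltac:(lra) : 0 < vn + 1)).
have Hdel' : 0 < del / (vn + 1) by apply: Rdiv_lt_0_compat; lra.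
exists (mkposreal _ Hdel') => s Hs0 /= Hs.
have Has : 0 < Rabs s by apply: Rabs_pos_lt.
have Hsv : vnorm (fun j => s * h j) < del.
  rewrite vnorm_scale -/vn.
  have : Rabs s * (vn + 1) < del.
    by apply: (Rmult_lt_reg_r (/ (vn + 1))); [apply: Rinv_0_lt_compat; lra | field_simplify; lra].
  nra.
have := Hd _ Hsv; rewrite inner_scale_r vnorm_scale -/vn.
have -> : vadd z (fun j => s * h j) = vadd x (fun j => (t + s) * h j).
  by apply: functional_extensionality => j; rewrite /z /vadd; ring.
set num := f _ - f z - s * _ => Habs.
have -> : (f (vadd x (fun j => (t + s) * h j)) - f z) / s - inner (g z) h = num / s.
  by rewrite /num; field.
rewrite /Rdiv Rabs_mult Rabs_inv; apply: (Rmult_lt_reg_r (Rabs s)) => //.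
rewrite Rmult_assoc Rinv_l ?Rmult_1_r; last lra.
apply: Rle_lt_trans Habs _.
have -> : eps / (vn + 1) * (Rabs s * vn) = eps * Rabs s * (vn / (vn + 1)) by field; lra.
have : vn / (vn + 1) < 1 by apply: (Rmult_lt_reg_r (vn + 1)); [lra | field_simplify; lra].
have : 0 < eps * Rabs s by apply: Rmult_lt_0_compat.
nra.
Qed.

Lemma grad_ineq x y : f x + inner (g x) (vsub y x) <= f y.
Proof.
set h := vsub y x; set phi := fun s => f (vadd x (fun j => s * h j)).
have Hphi0 : phi 0 = f x.
  by rewrite /phi; congr f; apply: functional_extensionality => j; rewrite /vadd; ring.
have := line_deriv x h 0; rewrite -/phi.
have -> : vadd x (fun j => 0 * h j) = x.
  by apply: functional_extensionality => j; rewrite /vadd; ring.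
move=> Hd; apply: Rle_plus_epsilon => eps Heps.
have [del Hdel] := Hd eps Heps.
set t := Rmin 1 (del / 2).
have Ht0 : 0 < t by apply: Rmin_pos; [lra | have := cond_pos del; lra].
have Ht1 : t <= 1 := Rmin_l _ _.
have Hconv : phi t <= t * f y + (1 - t) * f x.
  have := Hc y x (conj (Rlt_le _ _ Ht0) Ht1); congr (f _ <= _).
  by apply: functional_extensionality => j; rewrite /vadd /vscale /h /vsub; ring.
have := Hdel t (Rgt_not_eq _ _ Ht0).
rewrite Rplus_0_l Rabs_pos_eq; last lra.
have := Rmin_r 1 (del / 2); have := cond_pos del; rewrite -/t => ? ? /(_ ltac:(lra)).
rewrite Hphi0 => /Rabs_def2 [_ Hlo].
(* the difference quotient of a convex function at 0 is at most the chord slope f y - f x *)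
have : (phi t - f x) / t <= f y - f x.
  apply: (Rmult_le_reg_r t) => //; field_simplify; lra.
lra.
Qed.

Lemma bregman_ge0 y x : 0 <= bregman f g y x.
Proof. by rewrite /bregman; have := grad_ineq x y; lra. Qed.

Lemma descent x h : f (vadd x h) <= f x + inner (g x) h + L / 2 * nsq h.
Proof.
set a := inner (g x) h; set K := L / 2 * nsq h.
set phi := fun s => f (vadd x (fun j => s * h j)).
set phi' := fun s => inner (g (vadd x (fun j => s * h j))) h.
have Hd s : derivable_pt_lim (fun s => phi s - (a * s + K * (s * s))) s
    (phi' s - (a + K * (2 * s))).
  apply: derivable_pt_lim_minus; first exact: line_deriv.
  have -> : a + K * (2 * s) = a * 1 + K * (1 * s + s * 1) by ring.
  apply: derivable_pt_lim_plus; first exact: derivable_pt_lim_scal (derivable_pt_lim_id s).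
  by apply: derivable_pt_lim_scal; apply: derivable_pt_lim_mult; apply: derivable_pt_lim_id.
have [c [Hc1 Hc01]] := MVT_cor2 _ _ 0 1 Rlt_0_1 (fun c _ => Hd c).
(* by Lipschitz continuity of g, phi' grows at most like a + 2 K s *)
have Hphi' : phi' c - (a + K * (2 * c)) <= 0.
  rewrite /phi' /a /K; set y := vadd x (fun j => c * h j).
  have -> : inner (g y) h - (inner (g x) h + L / 2 * nsq h * (2 * c)) =
      inner (vsub (g y) (g x)) h - L * c * nsq h.
    have -> : vsub (g y) (g x) = fun j => 1 * g y j + (-1) * g x j.
      by apply: functional_extensionality => j; rewrite /vsub; ring.
    rewrite inner_lin_l; field.
  have := HL y x.
  have -> : vsub y x = (fun j => c * h j).
    by apply: functional_extensionality => j; rewrite /vsub /y /vadd; ring.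
  rewrite vnorm_scale Rabs_pos_eq; last lra.
  have := cauchy_schwarz (vsub (g y) (g x)) h; have := vnorm_ge0 h.
  have := vnorm_sq h; rewrite /= Rmult_1_r => <-; nra.
have E1 : phi 1 = f (vadd x h).
  by rewrite /phi; congr f; apply: functional_extensionality => j; rewrite /vadd; ring.
have E0 : phi 0 = f x.
  by rewrite /phi; congr f; apply: functional_extensionality => j; rewrite /vadd; ring.
have := Hc1; rewrite /= E1 E0; nra.
Qed.

Lemma cocoercive x y : nsq (vsub (g y) (g x)) <= 2 * L * bregman f g y x.
Proof.
set w := vsub (g y) (g x).
have Hw := nsq_ge0 w.
have [Lneg|[L0|Lpos]] : L < 0 \/ L = 0 \/ 0 < L by lra.
- have Hyx : y = x by apply: (lipschitz_grad_neg Lneg HL).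
  rewrite /w /bregman /nsq Hyx inner_zero_l => [|j]; last by rewrite /vsub; lra.
  rewrite inner_sym inner_zero_l => [|j]; last by rewrite /vsub; lra.
  lra.
- have := HL y x; rewrite L0 Rmult_0_l => /vnorm_le0 /inner_zero_l Hw0.
  by rewrite /w /nsq Hw0; lra.
(* step from y against the gradient difference, then compare with the tangent plane at x *)
have Hd := descent y (fun j => (- / L) * w j).
have Hgi := grad_ineq x (vadd y (fun j => (- / L) * w j)).
have Ev : vsub (vadd y (fun j => (- / L) * w j)) x = (fun j => 1 * vsub y x j + (- / L) * w j).
  by apply: functional_extensionality => j; rewrite /vsub /vadd; ring.
rewrite Ev inner_lin_r in Hgi; rewrite inner_scale_r nsq_scale in Hd.
have Ew : inner (g y) w - inner (g x) w = nsq w.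
  have Ew : w = (fun j => 1 * g y j + (-1) * g x j).
    by apply: functional_extensionality => j; rewrite /w /vsub; ring.
  by rewrite /nsq {3}Ew inner_lin_l; ring.
have Key : / L * nsq w / 2 <= bregman f g y x.
  have EL : L / 2 * (- / L * - / L * nsq w) = / L * nsq w / 2 by field; lra.
  have Ew' : - / L * inner (g y) w - - / L * inner (g x) w = - (/ L * nsq w) by rewrite -Ew; ring.
  rewrite /bregman; lra.
have := Rmult_le_compat_l (2 * L) _ _ ltac:(lra) Key.
by have -> : 2 * L * (/ L * nsq w / 2) = nsq w by field; lra.
Qed.

End SmoothConvex.

Lemma quadratic_growth d (F : vec d -> R) lam xstar :
  0 <= lam -> strongly_convex lam F -> (forall x, F xstar <= F x) ->
  forall x, lam / 2 * nsq (vsub x xstar) <= F x - F xstar.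
Proof.
move=> Hlam Hsc Hmin x; set Q := nsq (vsub x xstar).
have HQ : 0 <= Q := nsq_ge0 _.
apply: (le_of_le_add_small (b := lam / 2 * Q)) => [|t [Ht0 Ht1]]; first nra.
have := Hsc x xstar t (conj (Rlt_le _ _ Ht0) Ht1).
have := Hmin (vadd (vscale t x) (vscale (1 - t) xstar)).
rewrite vnorm_sq -/Q => H1 H2.
apply: (Rmult_le_reg_l t) => //; nra.
Qed.

Lemma young d beta (u v : vec d) : 0 < beta ->
  nsq (fun j => u j + v j) <= (1 + beta) * nsq u + (1 + / beta) * nsq v.
Proof.
move=> Hb; rewrite /nsq /inner -!sumR_scal -big_split; apply: sumR_le => j _ /=.
have : 0 <= (beta * u j - v j) * (beta * u j - v j) / beta.
  by apply: Rmult_le_pos; [apply: Rle_0_sqr | apply: Rlt_le; apply: Rinv_0_lt_compat].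
have -> : (beta * u j - v j) * (beta * u j - v j) / beta =
   beta * (u j * u j) - 2 * (u j * v j) + / beta * (v j * v j) by field; lra.
nra.
Qed.

Lemma variance_le_scalar n (u : 'I_n -> R) : (0 < n)%nat ->
  \big[Rplus/0]_(i < n) ((/ INR n * \big[Rplus/0]_(l < n) u l - u i) *
                         (/ INR n * \big[Rplus/0]_(l < n) u l - u i))
  <= \big[Rplus/0]_(i < n) (u i * u i).
Proof.
move=> Hn; have HnR : 0 < INR n by apply: lt_0_INR; apply/ltP.
set mu := / INR n * _.
have Hmu : \big[Rplus/0]_(l < n) u l = INR n * mu by rewrite /mu; field; lra.
have -> : \big[Rplus/0]_(i < n) ((mu - u i) * (mu - u i)) =
    \big[Rplus/0]_(i < n) (u i * u i) + (- 2 * mu) * \big[Rplus/0]_(i < n) u i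
    + \big[Rplus/0]_(i < n) (mu * mu).
  by rewrite -sumR_scal -!big_split; apply: eq_bigr => i _ /=; ring.
rewrite sumR_const Hmu; have := Rmult_le_pos _ _ (Rlt_le _ _ HnR) (Rle_0_sqr mu).
rewrite /Rsqr; lra.
Qed.

Lemma variance_le d n (U : 'I_n -> vec d) : (0 < n)%nat ->
  \big[Rplus/0]_(i < n) nsq (fun j => / INR n * \big[Rplus/0]_(l < n) U l j - U i j)
  <= \big[Rplus/0]_(i < n) nsq (U i).
Proof.
move=> Hn; rewrite /nsq /inner exchange_big [X in _ <= X]exchange_big /=.
by apply: sumR_le => j _; apply: (variance_le_scalar (fun i => U i j) Hn).
Qed.

Section UniformSequences.
Variable n : nat.
Hypothesis Hn : (0 < n)%nat.

Fixpoint Eseq r (F : seq 'I_n -> R) : R :=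
  match r with
  | 0 => F [::]
  | r'.+1 => / INR n * \big[Rplus/0]_(i < n) Eseq r' (fun s => F (i :: s))
  end.

Lemma EseqS r (F : seq 'I_n -> R) :
  Eseq r.+1 F = / INR n * \big[Rplus/0]_(i < n) Eseq r (fun s => F (i :: s)).
Proof. by []. Qed.

Lemma Eseq_le r (F G : seq 'I_n -> R) : (forall s, F s <= G s) -> Eseq r F <= Eseq r G.
Proof.
elim: r F G => [|r IH] F G H /=; first exact: H.
apply: Rmult_le_compat_l; first by apply: Rlt_le; apply: Rinv_0_lt_compat; apply: lt_0_INR; apply/ltP.
by apply: sumR_le => i _; apply: IH.
Qed.

Lemma Eseq_scal r a (F : seq 'I_n -> R) : Eseq r (fun s => a * F s) = a * Eseq r F.
Proof.
elim: r F => [|r IH] F //=.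
by rewrite (eq_bigr _ (fun i _ => IH _)) sumR_scal; ring.
Qed.

Lemma Eseq_addl r a (F : seq 'I_n -> R) : Eseq r (fun s => a + F s) = a + Eseq r F.
Proof.
have HnR : 0 < INR n by apply: lt_0_INR; apply/ltP.
elim: r F => [|r IH] F //=.
by rewrite (eq_bigr _ (fun i _ => IH _)) big_split sumR_const /=; field; lra.
Qed.

Definition ffun_cons r (p : 'I_n * {ffun 'I_r -> 'I_n}) : {ffun 'I_r.+1 -> 'I_n} :=
  [ffun t => if unlift ord0 t is Some t' then p.2 t' else p.1].

Definition ffun_uncons r (w : {ffun 'I_r.+1 -> 'I_n}) : 'I_n * {ffun 'I_r -> 'I_n} :=
  (w ord0, [ffun t => w (lift ord0 t)]).

Lemma ffun_consK r : cancel (@ffun_cons r) (@ffun_uncons r).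
Proof.
case=> i w; rewrite /ffun_cons /ffun_uncons /= ffunE unlift_none; congr pair.
by apply/ffunP => t; rewrite !ffunE liftK.
Qed.

Lemma ffun_unconsK r : cancel (@ffun_uncons r) (@ffun_cons r).
Proof.
move=> w; apply/ffunP => t; rewrite /ffun_cons /ffun_uncons ffunE.
by case: unliftP => [t'|] -> /=; rewrite ?ffunE.
Qed.

Lemma map_ffun_cons r i (w : {ffun 'I_r -> 'I_n}) :
  [seq ffun_cons (i, w) t | t <- enum 'I_r.+1] = i :: [seq w t | t <- enum 'I_r].
Proof.
rewrite enum_ordSl /= /ffun_cons ffunE unlift_none /=; congr cons.
by rewrite -map_comp; apply: eq_map => t /=; rewrite ffunE liftK.
Qed.

Lemma sum_ffun_Eseq r (F : seq 'I_n -> R) :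
  \big[Rplus/0]_(w : {ffun 'I_r -> 'I_n}) ((/ INR n) ^ r * F [seq w t | t <- enum 'I_r])
  = Eseq r F.
Proof.
elim: r F => [|r IH] F.
  rewrite /= (eq_bigr (fun _ => F [::])) => [|w _]; last first.
    by rewrite Rmult_1_l; congr F; apply: size0nil; rewrite size_map size_enum_ord.
  by rewrite sumR_const_card card_ffun !card_ord expn0 /=; ring.
rewrite (reindex (@ffun_cons r)); last first.
  by exists (@ffun_uncons r) => w _; [apply: ffun_consK | apply: ffun_unconsK].
rewrite -(pair_big xpredT xpredT (fun i w =>
  (/ INR n) ^ r.+1 * F [seq ffun_cons (i, w) t | t <- enum 'I_r.+1])) /= -sumR_scal.
apply: eq_bigr => i _; rewrite -IH -sumR_scal; apply: eq_bigr => w _.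
by rewrite map_ffun_cons /=; ring.
Qed.

End UniformSequences.

Definition geosum q r := \big[Rplus/0]_(t < r) q ^ (r - t.+1).

Lemma geosumS q r : geosum q r.+1 = q ^ r + geosum q r.
Proof. by rewrite /geosum big_ord_recl subn1. Qed.

Lemma geosumE q r : geosum q r * (1 - q) = 1 - q ^ r.
Proof.
elim: r => [|r IH]; first by rewrite /geosum big_ord0 /=; ring.
by rewrite geosumS Rmult_plus_distr_r IH /=; ring.
Qed.

Section LyapunovUnrolling.
Variables (A : Type) (n : nat) (step : A -> 'I_n -> A) (T F N : A -> R) (q e : R).
Hypotheses (Hn : (0 < n)%nat) (Hq : 0 <= q) (HN : forall a i, N (step a i) = N a)
  (Hstep : forall a, / INR n * \big[Rplus/0]_(i < n) T (step a i) <= q * T a - F a + e * N a).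

Lemma Eseq_unroll r a dflt :
  Eseq r (fun ws => \big[Rplus/0]_(t < r) (q ^ (r - t.+1) * F (nth dflt (a :: scanl step a ws) t))
                    + T (nth dflt (a :: scanl step a ws) r))
  <= q ^ r * T a + e * N a * geosum q r.
Proof.
have HnR : 0 < INR n by apply: lt_0_INR; apply/ltP.
elim: r a => [|r IH] a; first by rewrite /= big_ord0 /geosum big_ord0; lra.
rewrite EseqS (eq_bigr (fun i => q ^ r * F a + Eseq r (fun ws =>
    \big[Rplus/0]_(t < r) (q ^ (r - t.+1) * F (nth dflt (step a i :: scanl step (step a i) ws) t))
    + T (nth dflt (step a i :: scanl step (step a i) ws) r)))); last first.
  move=> i _; rewrite -(Eseq_addl Hn); congr (Eseq r _); apply: functional_extensionality => ws.
  by rewrite big_ord_recl subn1 /= Rplus_assoc.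
apply: Rle_trans (_ : _ <= / INR n * \big[Rplus/0]_(i < n)
    (q ^ r * F a + (q ^ r * T (step a i) + e * N a * geosum q r))) _.
  apply: Rmult_le_compat_l; first by apply: Rlt_le; apply: Rinv_0_lt_compat.
  by apply: sumR_le => i _; apply: Rplus_le_compat_l; rewrite -(HN a i); apply: IH.
rewrite !big_split !sumR_const sumR_scal geosumS.
have := Rmult_le_compat_l _ _ _ (pow_le _ r Hq) (Hstep a).
set Ts := \big[Rplus/0]_(i < n) T (step a i).
have -> : / INR n * (INR n * (q ^ r * F a) + (q ^ r * Ts + INR n * (e * N a * geosum q r))) =
    q ^ r * F a + q ^ r * (/ INR n * Ts) + e * N a * geosum q r by field; lra.
rewrite /=; nra.
Qed.

End LyapunovUnrolling.

Section MonotoneIteration.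
Variables (A : Type) (Op : (A -> R) -> A -> R) (theta : R) (Phi : A -> R).
Hypotheses (Op_mono : forall P Q, (forall s, P s <= Q s) -> forall s, Op P s <= Op Q s)
  (Op_scal : forall a P s, Op (fun s => a * P s) s = a * Op P s)
  (Op_contr : forall s, Op Phi s <= theta * Phi s).

Lemma iter_contraction k s : Nat.iter k.+1 Op Phi s <= theta * Nat.iter k Op Phi s.
Proof.
rewrite Nat.iter_succ_r; elim: k s => [|k IH] s; first exact: Op_contr.
by rewrite /= -Op_scal; apply: Op_mono.
Qed.

End MonotoneIteration.

Lemma hsag_traj_scanl d n grad (S : {set 'I_n}) eta (st : inner_state d n) ws :
  hsag_traj grad S eta st ws = st :: scanl (hsag_step grad S eta) st ws.
Proof. by elim: ws st => //= i ws IH st; rewrite IH. Qed.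

Lemma epoch_op_scal d n m grad (S : {set 'I_n}) eta p a (P : inner_state d n -> R) s :
  epoch_op m grad S eta p (fun s => a * P s) s = a * epoch_op m grad S eta p P s.
Proof.
rewrite /epoch_op -sumR_scal; apply: eq_bigr => w _.
rewrite (eq_bigr (fun j : 'I_m => a * (p j.+1 * P (hsag_epoch grad S eta s w j)))) => [|j _].
  by rewrite sumR_scal; set X := \big[Rplus/0]_(j < m) _; ring.
by ring.
Qed.

Section HSAG.
Variables (d n : nat) (fs : 'I_n -> vec d -> R) (grad : 'I_n -> vec d -> vec d).
Variables (L : R) (xstar : vec d) (S : {set 'I_n}).
Hypotheses (Hn : (0 < n)%nat) (Hgrad : forall i, has_gradient (fs i) (grad i))
  (Hconv : forall i, convex (fs i)) (HL : forall i, lipschitz_grad L (grad i))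
  (Hmin : forall x, avg_fun fs xstar <= avg_fun fs x).

Lemma INR_n_gt0 : 0 < INR n.
Proof. by apply: lt_0_INR; apply/ltP. Qed.

Lemma INR_n_mulK a : INR n * (/ INR n * a) = a.
Proof. by have := INR_n_gt0 => ?; field; lra. Qed.

Definition gap x := avg_fun fs x - avg_fun fs xstar.

Lemma gap_ge0 x : 0 <= gap x.
Proof. by have := Hmin x; rewrite /gap; lra. Qed.

Lemma sum_grad_xstar j : \big[Rplus/0]_(i < n) grad i xstar j = 0.
Proof.
have HnR := INR_n_gt0.
set W := fun j => \big[Rplus/0]_(i < n) grad i xstar j.
have HW := nsq_ge0 W.
suff : nsq W <= 0 by move=> ?; apply: (@nsq_eq0 _ W); lra.
(* a gradient step of length t from the minimiser decreases the sum by t |W|^2 - O(t^2) *)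
apply: (le_of_le_add_small (b := INR n * Rabs L / 2 * nsq W)) => [|t [Ht0 Ht1]].
  by have := Rmult_le_pos _ _ (Rlt_le _ _ HnR) (Rabs_pos L); nra.
set h := fun j => (- t) * W j.
have Hdes : \big[Rplus/0]_(i < n) fs i (vadd xstar h) <=
    \big[Rplus/0]_(i < n) (fs i xstar + inner (grad i xstar) h + L / 2 * nsq h).
  by apply: sumR_le => i _; apply: descent.
rewrite !big_split sumR_const -inner_sum_l -/W /h inner_scale_r nsq_scale /= in Hdes.
have Hm : \big[Rplus/0]_(i < n) fs i xstar <= \big[Rplus/0]_(i < n) fs i (vadd xstar h).
  apply: (Rmult_le_reg_l (/ INR n)); first exact: Rinv_0_lt_compat.
  exact: Hmin.
have HLa : INR n * L * (t * t * nsq W) <= INR n * Rabs L * (t * t * nsq W).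
  by apply: Rmult_le_compat_r; [nra | apply: Rmult_le_compat_l; [lra | apply: Rle_abs]].
set A := \big[Rplus/0]_(i < n) fs i xstar in Hm Hdes.
set B := \big[Rplus/0]_(i < n) fs i (vadd xstar _) in Hm Hdes.
rewrite /nsq in Hdes HLa HW *; apply: (Rmult_le_reg_l t) => //; lra.
Qed.

Lemma avg_bregman_xstar x :
  / INR n * \big[Rplus/0]_(i < n) bregman (fs i) (grad i) x xstar = gap x.
Proof.
rewrite /bregman /gap /avg_fun !sumR_sub -inner_sum_l inner_zero_l; last exact: sum_grad_xstar.
by rewrite Rminus_0_r Rmult_minus_distr_l.
Qed.

Definition Gcompl (st : inner_state d n) :=
  / INR n * \big[Rplus/0]_(i < n | i \notin S) bregman (fs i) (grad i) (st.2 i) xstar.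

Lemma Gtilde_ge0 st : 0 <= Gtilde fs grad S xstar st.
Proof.
apply: Rmult_le_pos; first by apply: Rlt_le; apply: Rinv_0_lt_compat; apply: INR_n_gt0.
by apply: sumR_ge0 => i _; apply: bregman_ge0.
Qed.

Lemma Gcompl_ge0 st : 0 <= Gcompl st.
Proof.
apply: Rmult_le_pos; first by apply: Rlt_le; apply: Rinv_0_lt_compat; apply: INR_n_gt0.
by apply: sumR_ge0 => i _; apply: bregman_ge0.
Qed.

Lemma Gtilde_add_Gcompl st :
  / INR n * \big[Rplus/0]_(i < n) bregman (fs i) (grad i) (st.2 i) xstar =
  Gtilde fs grad S xstar st + Gcompl st.
Proof. by rewrite /Gtilde /Gcompl (bigID (fun i => i \in S)) /= Rmult_plus_distr_l. Qed.

Lemma Gcompl_step eta st i : Gcompl (hsag_step grad S eta st i) = Gcompl st.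
Proof. by congr (_ * _); apply: eq_bigr => l /negbTE Hl; rewrite /= Hl andbF. Qed.

Lemma Gtilde_step eta st :
  / INR n * \big[Rplus/0]_(i < n) Gtilde fs grad S xstar (hsag_step grad S eta st i)
  <= (1 - / INR n) * Gtilde fs grad S xstar st + / INR n * gap st.1.
Proof.
have HnR := INR_n_gt0.
case: st => x a /=; rewrite /Gtilde /hsag_step /= sumR_scal exchange_big /=.
(* alpha_l is refreshed to x exactly when i_t = l *)
rewrite (eq_bigr (fun l => INR n * bregman (fs l) (grad l) (a l) xstar +
     (bregman (fs l) (grad l) x xstar - bregman (fs l) (grad l) (a l) xstar))); last first.
  move=> l Hl; rewrite -(sumR_if_eq l); apply: eq_bigr => i _.
  by rewrite Hl andbT; case: (l == i).
rewrite big_split sumR_sub sumR_scal /=.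
set GS := \big[Rplus/0]_(l < n | l \in S) bregman _ _ (a l) xstar.
set XS := \big[Rplus/0]_(l < n | l \in S) bregman _ _ x xstar.
have HXS : / INR n * XS <= gap x.
  rewrite -avg_bregman_xstar; apply: Rmult_le_compat_l.
    by apply: Rlt_le; apply: Rinv_0_lt_compat.
  rewrite [X in _ <= X](bigID (fun l => l \in S)) /=.
  apply: (Rplus_le_reg_pos_r _ _ _ _ (Rle_refl _)).
  by apply: sumR_ge0 => i _; apply: bregman_ge0.
have -> : / INR n * (/ INR n * (INR n * GS + (XS - GS)))
   = (1 - / INR n) * (/ INR n * GS) + / INR n * (/ INR n * XS) by field; lra.
apply: Rplus_le_compat_l; apply: Rmult_le_compat_l => //.
by apply: Rlt_le; apply: Rinv_0_lt_compat.
Qed.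

Lemma gap_le_inner x :
  INR n * gap x <= inner (vsub x xstar) (fun j => \big[Rplus/0]_(i < n) grad i x j).
Proof.
have HnR := INR_n_gt0.
have -> : INR n * gap x = \big[Rplus/0]_(i < n) (fs i x - fs i xstar).
  by rewrite sumR_sub /gap /avg_fun -Rmult_minus_distr_l -Rmult_assoc Rinv_r ?Rmult_1_l //; lra.
rewrite inner_sum_r; apply: sumR_le => i _.
suff : fs i x - fs i xstar <= inner (vsub x xstar) (grad i x) by [].
have := grad_ineq (Hgrad i) (Hconv i) x xstar.
have -> : vsub xstar x = fun j => (-1) * vsub x xstar j.
  by apply: functional_extensionality => j; rewrite /vsub; ring.
rewrite inner_scale_r inner_sym; lra.
Qed.

Definition hsag_dir x (a : 'I_n -> vec d) i : vec d := fun j =>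
  grad i x j - grad i (a i) j + / INR n * \big[Rplus/0]_(l < n) grad l (a l) j.

Lemma sum_hsag_dir x a :
  (fun j => \big[Rplus/0]_(i < n) hsag_dir x a i j) = fun j => \big[Rplus/0]_(i < n) grad i x j.
Proof.
have HnR := INR_n_gt0.
apply: functional_extensionality => j; rewrite /hsag_dir big_split sumR_sub sumR_const /=.
field; lra.
Qed.

Lemma hsag_dir_moment beta x a : 0 < beta ->
  \big[Rplus/0]_(i < n) nsq (hsag_dir x a i) <=
  (1 + beta) * (2 * L * (INR n * gap x))
  + (1 + / beta) * (2 * L * \big[Rplus/0]_(l < n) bregman (fs l) (grad l) (a l) xstar).
Proof.
move=> Hbeta; have HnR := INR_n_gt0.
set U := fun l => vsub (grad l (a l)) (grad l xstar).
have EV i : hsag_dir x a i =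
    fun j => vsub (grad i x) (grad i xstar) j + (/ INR n * \big[Rplus/0]_(l < n) U l j - U i j).
  apply: functional_extensionality => j.
  rewrite /hsag_dir /U /vsub sumR_sub sum_grad_xstar.
  by set Ga := \big[Rplus/0]_(l < n) grad l (a l) j; ring.
have HA : \big[Rplus/0]_(i < n) nsq (vsub (grad i x) (grad i xstar)) <= 2 * L * (INR n * gap x).
  rewrite -avg_bregman_xstar INR_n_mulK -sumR_scal.
  by apply: sumR_le => i _; apply: cocoercive.
have HB : \big[Rplus/0]_(i < n) nsq (fun j => / INR n * \big[Rplus/0]_(l < n) U l j - U i j)
    <= 2 * L * \big[Rplus/0]_(l < n) bregman (fs l) (grad l) (a l) xstar.
  apply: Rle_trans (variance_le U Hn) _; rewrite -sumR_scal.
  by apply: sumR_le => i _; apply: cocoercive.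
apply: Rle_trans (_ : _ <= (1 + beta) * \big[Rplus/0]_(i < n) nsq (vsub (grad i x) (grad i xstar))
   + (1 + / beta) * \big[Rplus/0]_(i < n) nsq (fun j => / INR n * \big[Rplus/0]_(l < n) U l j - U i j)) _.
  rewrite -!sumR_scal -big_split; apply: sumR_le => i _ /=; rewrite EV; exact: young.
have := Rinv_0_lt_compat _ Hbeta.
by move=> ?; apply: Rplus_le_compat; apply: Rmult_le_compat_l => //; lra.
Qed.

Lemma dist_step eta beta x a : 0 <= eta -> 0 < beta ->
  / INR n * \big[Rplus/0]_(i < n) nsq (vsub (hsag_step grad S eta (x, a) i).1 xstar)
  <= nsq (vsub x xstar) - 2 * eta * gap x
     + eta ^ 2 * (2 * L * (1 + beta) * gap x + 2 * L * (1 + / beta) *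
         (/ INR n * \big[Rplus/0]_(l < n) bregman (fs l) (grad l) (a l) xstar)).
Proof.
move=> Heta Hbeta; have HnR := INR_n_gt0.
set u := vsub x xstar.
set Da := \big[Rplus/0]_(l < n) bregman _ _ (a l) xstar.
rewrite (eq_bigr (fun i => nsq u + 2 * - eta * inner u (hsag_dir x a i)
    + - eta * - eta * nsq (hsag_dir x a i))); last first.
  move=> i _; rewrite -nsq_expand; congr nsq.
  by apply: functional_extensionality => j; rewrite /u /vsub /hsag_dir /=; ring.
rewrite !big_split sumR_const !sumR_scal -inner_sum_r sum_hsag_dir.
have Hin := gap_le_inner x; rewrite -/u in Hin.
have Hmom := hsag_dir_moment x a Hbeta.
set IW := inner u _ in Hin *.
set SV := \big[Rplus/0]_(i < n) nsq (hsag_dir x a i) in Hmom *.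
set M := (1 + beta) * _ + _ in Hmom.
have -> : / INR n * (INR n * nsq u + 2 * - eta * IW + - eta * - eta * SV) =
    nsq u + / INR n * (- (2 * eta * IW) + eta ^ 2 * SV) by field; lra.
have -> : nsq u - 2 * eta * gap x + eta ^ 2 * (2 * L * (1 + beta) * gap x
    + 2 * L * (1 + / beta) * (/ INR n * Da)) =
    nsq u + / INR n * (- (2 * eta * (INR n * gap x)) + eta ^ 2 * M).
  by rewrite /M -/Da; field; lra.
apply: Rplus_le_compat_l; apply: Rmult_le_compat_l; first by apply: Rlt_le; apply: Rinv_0_lt_compat.
have := Rmult_le_compat_l _ _ _ (pow_le _ 2 Heta) Hmom.
have := Rmult_le_compat_l _ _ _ Heta Hin.
lra.
Qed.

(* the state [st0] built by [hsag_epoch] *)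
Definition epoch_start (s : inner_state d n) : inner_state d n :=
  (s.1, fun i => if i \in S then s.2 i else s.1).

Lemma Gtilde_epoch_start s : Gtilde fs grad S xstar (epoch_start s) = Gtilde fs grad S xstar s.
Proof. by congr (_ * _); apply: eq_bigr => i /= ->. Qed.

Lemma Gcompl_epoch_start s : Gcompl (epoch_start s) <= gap s.1.
Proof.
rewrite -avg_bregman_xstar; apply: Rmult_le_compat_l.
  by apply: Rlt_le; apply: Rinv_0_lt_compat; apply: INR_n_gt0.
rewrite [X in _ <= X](bigID (fun i => i \notin S)) /=.
rewrite (eq_bigr (fun i => bregman (fs i) (grad i) s.1 xstar)) => [|i /negbTE /= ->] //.
apply: (Rplus_le_reg_pos_r _ _ _ _ (Rle_refl _)).
by apply: sumR_ge0 => i _; apply: bregman_ge0.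
Qed.

Lemma epoch_op_mono m eta p P Q : (forall j : 'I_m, 0 <= p j.+1) ->
  (forall s, P s <= Q s) -> forall s, epoch_op m grad S eta p P s <= epoch_op m grad S eta p Q s.
Proof.
move=> Hp H s; apply: sumR_le => w _; apply: Rmult_le_compat_l.
  by apply: pow_le; apply: Rlt_le; apply: Rinv_0_lt_compat; apply: INR_n_gt0.
by apply: sumR_le => j _; apply: Rmult_le_compat_l.
Qed.

Section Epoch.
Variables (lam eta c beta kappa : R) (m : nat) (p : nat -> R).
Hypotheses (Hlam : 0 < lam) (Hsc : strongly_convex lam (avg_fun fs))
  (Heta : 0 < eta) (Hc : 0 < c) (Hbeta : 0 < beta) (Hkappa : 1 < kappa)
  (H1 : / kappa + 2 * L * c * eta ^ 2 * (1 + / beta) <= / INR n).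

Let q := 1 - / kappa.
Let delta := 2 * c * eta * (1 - L * eta * (1 + beta)) - / INR n - 2 * c / (kappa * lam).
Let e := 2 * L * c * eta ^ 2 * (1 + / beta).

Lemma q_ge0 : 0 <= q.
Proof. by have := Rinv_lt_contravar 1 kappa ltac:(lra) Hkappa; rewrite Rinv_1 /q; lra. Qed.

Lemma dist_le_gap x : nsq (vsub x xstar) <= 2 / lam * gap x.
Proof.
have := quadratic_growth (Rlt_le _ _ Hlam) Hsc Hmin x; rewrite -/(gap x) => H.
apply: (Rmult_le_reg_l (lam / 2)); first lra.
by have -> : lam / 2 * (2 / lam * gap x) = gap x by field; lra.
Qed.

Definition lyap (st : inner_state d n) := c * nsq (vsub st.1 xstar) + Gtilde fs grad S xstar st.

Lemma lyap_step st : / INR n * \big[Rplus/0]_(i < n) lyap (hsag_step grad S eta st i)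
  <= q * lyap st - delta * gap st.1 + e * Gcompl st.
Proof.
have HnR := INR_n_gt0.
case: st => x a.
have HG := Gtilde_step eta (x, a).
have HD := dist_step x a (Rlt_le _ _ Heta) Hbeta.
have := Gtilde_add_Gcompl (x, a); rewrite /= => EG; rewrite EG in HD.
have Hq := dist_le_gap x.
have HG0 := Gtilde_ge0 (x, a).
rewrite /lyap big_split /= sumR_scal.
set G := Gtilde _ _ _ _ (x, a) in HG HD HG0 *.
set N := Gcompl (x, a) in HD *.
set F := gap x in HG HD Hq *.
set Nu := nsq (vsub x xstar) in HD Hq *.
set SD := \big[Rplus/0]_(i < n) nsq _ in HD *.
set SG := \big[Rplus/0]_(i < n) Gtilde _ _ _ _ _ in HG *.
have HcD : / INR n * (c * SD) <= c * (Nu - 2 * eta * F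
    + eta ^ 2 * (2 * L * (1 + beta) * F + 2 * L * (1 + / beta) * (G + N))).
  by rewrite Rmult_comm Rmult_assoc; apply: Rmult_le_compat_l; lra.
(* the slack splits into a quadratic-growth term and a term controlled by H1 *)
have Key : q * (c * Nu + G) - delta * F + e * N
    - (c * (Nu - 2 * eta * F + eta ^ 2 * (2 * L * (1 + beta) * F + 2 * L * (1 + / beta) * (G + N)))
       + ((1 - / INR n) * G + / INR n * F))
  = c / kappa * (2 / lam * F - Nu) + G * (/ INR n - (/ kappa + e)).
  by rewrite /q /delta /e; field; lra.
have P1 : 0 <= c / kappa * (2 / lam * F - Nu).
  by apply: Rmult_le_pos; [apply: Rlt_le; apply: Rdiv_lt_0_compat; lra | lra].
have P2 : 0 <= G * (/ INR n - (/ kappa + e)) by apply: Rmult_le_pos => //; rewrite /e; lra.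
rewrite Rmult_plus_distr_l; lra.
Qed.

Lemma lyap_epoch_start s : lyap (epoch_start s) <= 2 * c / lam * gap s.1 + Gtilde fs grad S xstar s.
Proof.
rewrite /lyap Gtilde_epoch_start; apply: Rplus_le_compat_r.
have := Rmult_le_compat_l _ _ _ (Rlt_le _ _ Hc) (dist_le_gap s.1).
by have -> : c * (2 / lam * gap s.1) = 2 * c / lam * gap s.1 by field; lra.
Qed.

Lemma err_Gcompl_epoch_start s : e * Gcompl (epoch_start s) <= e * gap s.1.
Proof.
have HN := Gcompl_epoch_start s.
have [HL0|HLneg] := Rle_lt_dec 0 L.
  apply: Rmult_le_compat_l => //; have := Rinv_0_lt_compat _ Hbeta.
  move=> ?; apply: Rmult_le_pos; last lra.
  by apply: Rmult_le_pos; [nra | apply: pow_le; lra].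
(* a negative Lipschitz constant is only possible on a one-point space *)
have Hx : s.1 = xstar := lipschitz_grad_neg HLneg (HL (Ordinal Hn)) _ _.
have Hgap : gap s.1 = 0 by rewrite /gap Hx; ring.
have := Gcompl_ge0 (epoch_start s); rewrite Hgap in HN * => ?.
have -> : Gcompl (epoch_start s) = 0 by lra.
lra.
Qed.

Hypotheses (Hgamma : 0 < hsag_gamma n m L lam eta c beta kappa)
  (Hp : forall j, (1 <= j <= m)%nat -> p j = q ^ (m - j) / geosum q m).

Let gamma := hsag_gamma n m L lam eta c beta kappa.

Lemma gamma_eq : gamma = geosum q m * delta.
Proof.
have E := geosumE q m.
have -> : geosum q m = kappa * (1 - q ^ m).
  by rewrite -E /q; field; lra.
by rewrite /gamma /hsag_gamma /delta /q.
Qed.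

Lemma geosum_gt0 : 0 < geosum q m.
Proof.
have : 0 <= geosum q m by apply: sumR_ge0 => t _; apply: pow_le; apply: q_ge0.
have : geosum q m <> 0 by move=> H0; move: Hgamma; rewrite -/gamma gamma_eq H0; lra.
lra.
Qed.

Lemma p_ge0 (j : 'I_m) : 0 <= p j.+1.
Proof.
rewrite Hp ?ltn_ord //; apply: Rmult_le_pos; first by apply: pow_le; apply: q_ge0.
by apply: Rlt_le; apply: Rinv_0_lt_compat; apply: geosum_gt0.
Qed.

Lemma selection_average (X : 'I_m -> R) G :
  \big[Rplus/0]_(j < m) (p j.+1 * (X j + / gamma * G)) =
  / gamma * (\big[Rplus/0]_(j < m) (q ^ (m - j.+1) * (delta * X j)) + G).
Proof.
have HZ := geosum_gt0.
have Hdelta : delta <> 0 by move=> H0; move: Hgamma; rewrite -/gamma gamma_eq H0; lra.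
rewrite (eq_bigr (fun j : 'I_m => / gamma * (q ^ (m - j.+1) * (delta * X j))
    + q ^ (m - j.+1) * / geosum q m * (/ gamma * G))) => [|j _]; last first.
  by rewrite Hp ?ltn_ord // gamma_eq; field; lra.
rewrite big_split /= sumR_scal -big_distrl -big_distrl /= -/(geosum q m) Rinv_r; lra.
Qed.

Definition epoch_Phi s := gap s.1 + / gamma * Gtilde fs grad S xstar s.

Lemma epoch_op_le_unrolled s :
  epoch_op m grad S eta p epoch_Phi s
  <= / gamma * (q ^ m * lyap (epoch_start s) + e * Gcompl (epoch_start s) * geosum q m).
Proof.
have Hig : 0 < / gamma by apply: Rinv_0_lt_compat.
set st0 := epoch_start s.
set tr := fun ws => st0 :: scanl (hsag_step grad S eta) st0 ws.
have -> : epoch_op m grad S eta p epoch_Phi s = Eseq m (fun ws => \big[Rplus/0]_(j < m)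
    (p j.+1 * (gap (nth st0 (tr ws) j).1 + / gamma * Gtilde fs grad S xstar (nth st0 (tr ws) m)))).
  rewrite /epoch_op -sum_ffun_Eseq //; apply: eq_bigr => w _; congr (_ * _).
  by apply: eq_bigr => j _; rewrite /hsag_epoch hsag_traj_scanl.
apply: Rle_trans (_ : _ <= Eseq m (fun ws => / gamma *
    (\big[Rplus/0]_(t < m) (q ^ (m - t.+1) * (delta * gap (nth st0 (tr ws) t).1))
     + lyap (nth st0 (tr ws) m)))) _.
  apply: Eseq_le => // ws; rewrite selection_average; apply: Rmult_le_compat_l; first lra.
  apply: Rplus_le_compat_l; rewrite /lyap -[X in X <= _]Rplus_0_l; apply: Rplus_le_compat_r.
  by apply: Rmult_le_pos; [lra | apply: nsq_ge0].
rewrite Eseq_scal; apply: Rmult_le_compat_l; first lra.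
apply: (Eseq_unroll (F := fun st => delta * gap st.1)) => //; first exact: q_ge0.
  by move=> st i; apply: Gcompl_step.
exact: lyap_step.
Qed.

Let theta := hsag_theta n m L lam eta c beta kappa.

Lemma epoch_contraction s : epoch_op m grad S eta p epoch_Phi s <= theta * epoch_Phi s.
Proof.
have Hg : 0 < gamma := Hgamma.
have Hig : 0 < / gamma by apply: Rinv_0_lt_compat.
apply: Rle_trans (epoch_op_le_unrolled s) _.
have HF := gap_ge0 s.1; have HG := Gtilde_ge0 s; have Hqm := pow_le _ m q_ge0.
have HZ : geosum q m = kappa * (1 - q ^ m) by have := geosumE q m; rewrite /q => <-; field; lra.
set F := gap s.1 in HF *; set G := Gtilde _ _ _ _ s in HG *.
have HT := lyap_epoch_start s; rewrite -/F -/G in HT.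
have HN := err_Gcompl_epoch_start s; rewrite -/F in HN.
have HN' := Rmult_le_compat_r _ _ _ (Rlt_le _ _ geosum_gt0) HN.
set th1 := 2 * c / (gamma * lam) * q ^ m
  + 2 * L * c * eta ^ 2 / gamma * (1 + / beta) * kappa * (1 - q ^ m).
have Hth1 : th1 <= theta := Rmax_l _ _.
have Hth2 : q ^ m <= theta := Rmax_r _ _.
apply: Rle_trans (_ : _ <= / gamma * (q ^ m * (2 * c / lam * F + G) + e * F * geosum q m)) _.
  apply: Rmult_le_compat_l; first lra.
  by apply: Rplus_le_compat => //; apply: Rmult_le_compat_l.
have -> : / gamma * (q ^ m * (2 * c / lam * F + G) + e * F * geosum q m) =
    th1 * F + q ^ m * (/ gamma * G) by rewrite /th1 /e HZ; field; lra.
rewrite /epoch_Phi -/F -/G Rmult_plus_distr_l.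
apply: Rplus_le_compat; apply: Rmult_le_compat_r => //; nra.
Qed.

End Epoch.

End HSAG.

Unset Implicit Arguments.

Theorem theorem1
  (d n : nat) (fs : 'I_n -> vec d -> R) (grad : 'I_n -> vec d -> vec d)
  (L lam : R) (xstar x0 : vec d) (S : {set 'I_n})
  (eta : R) (m : nat) (c beta kappa : R) (p : nat -> R)
  (Hn : (0 < n)%nat)
  (Hgrad : forall i, has_gradient (fs i) (grad i))
  (Hconv : forall i, convex (fs i))
  (HL : forall i, lipschitz_grad L (grad i))
  (Hlam : 0 < lam)
  (Hsc : strongly_convex lam (avg_fun fs))
  (Hmin : forall x, avg_fun fs xstar <= avg_fun fs x)
  (Heta : 0 < eta) (Hm : (1 <= m)%nat) (Hc : 0 < c) (Hbeta : 0 < beta)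
  (Hkappa : 1 < kappa)
  (H1 : / kappa + 2 * L * c * eta ^ 2 * (1 + / beta) <= / INR n)
  (Hgamma : 0 < hsag_gamma n m L lam eta c beta kappa)
  (Htheta : hsag_theta n m L lam eta c beta kappa < 1)
  (Hp : forall j, (1 <= j <= m)%nat ->
     p j = (1 - / kappa) ^ (m - j) /
           \big[Rplus/0]_(l < m) (1 - / kappa) ^ (m - l.+1)) :
  let Phi := fun s : vec d * ('I_n -> vec d) =>
     avg_fun fs s.1 - avg_fun fs xstar
     + / hsag_gamma n m L lam eta c beta kappa * Gtilde fs grad S xstar s in
  forall k : nat,
    hsag_expect m grad S eta p x0 k.+1 Phi
      <= hsag_theta n m L lam eta c beta kappa * hsag_expect m grad S eta p x0 k Phi.
Proof.
(* [Hm] follows from [Hgamma], and [Htheta] is only needed for convergence, not for the contraction inequality *)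
move=> Phi k; apply: iter_contraction => [P Q HPQ s | a P s | s].
- exact: (epoch_op_mono grad S Hn eta (p_ge0 Hkappa Hgamma Hp) HPQ).
- exact: epoch_op_scal.
- exact: (epoch_contraction S Hn Hgrad Hconv HL Hmin Hlam Hsc Heta Hc Hbeta Hkappa H1 Hgamma Hp).
Qed.
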